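(* Let $(C,M)$ be an instance of 2-SBCM with $|C|=3$ characters and $n\ge 1$ meetings in which no two consecutive meetings of $M$ are equal. Then it has a solution using at most $\lceil n/2\rceil-1$ block crossings.
   Context: A storyline instance is a pair $(C,M)$ where $C=\{1,\dots,k\}$ is a set of characters and $M=[m_1,\dots,m_n]$ is a sequence of meetings with $m_i\subseteq C$; in 2-SBCM every meeting has exactly two characters. A permutation of $C$ lists each character exactly once. For $1\le a\le b<c\le k$, the block crossing $(a,b,c)$ maps $\langle \pi_1,\dots,\pi_k\rangle$ to $\langle \pi_1,\dots,\pi_{a-1},\pi_{b+1},\dots,\pi_c,\pi_a,\dots,\pi_b,\pi_{c+1},\dots,\pi_k\rangle$. A meeting fits (is supported by) a permutation if its characters occupy consecutive positions. A solution is a start permutation $\pi^0$ and sequences $B_1,\dots,B_n$ of block crossings (possibly empty) such that, with $\pi^i$ obtained by applying $B_i$ in order to $\pi^{i-1}$, $\pi^i$ supports $m_i$ for all $i$; its number of block crossings is $\sum_i|B_i|$. *)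

From mathcomp Require Import all_boot.
Set Implicit Arguments. Unset Strict Implicit. Unset Printing Implicit Defensive.

(* Positions in a permutation are 1-indexed as in the paper. *)

Definition is_perm (k : nat) (p : seq 'I_k) : Prop := perm_eq p (enum 'I_k).

Definition valid_bc (k : nat) (t : nat * nat * nat) : bool :=
  let: (a, b, c) := t in [&& 1 <= a, a <= b, b < c & c <= k].

(* <p_1..p_{a-1}, p_{b+1}..p_c, p_a..p_b, p_{c+1}..p_k> *)
Definition apply_bc (T : Type) (t : nat * nat * nat) (p : seq T) : seq T :=
  let: (a, b, c) := t in
  take a.-1 p ++ drop b (take c p) ++ drop a.-1 (take b p) ++ drop c p.

Definition apply_bcs (T : Type) (B : seq (nat * nat * nat)) (p : seq T) : seq T :=
  foldl (fun q t => apply_bc t q) p B.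

Definition supports (k : nat) (p : seq 'I_k) (m : {set 'I_k}) : Prop :=
  exists i l : nat, [set x in take l (drop i p)] = m.

Definition perm_at (k : nat) (p0 : seq 'I_k) (Bs : seq (seq (nat * nat * nat)))
  (i : nat) : seq 'I_k :=
  apply_bcs (flatten (take i Bs)) p0.

Definition is_solution (k : nat) (M : seq {set 'I_k}) (p0 : seq 'I_k)
  (Bs : seq (seq (nat * nat * nat))) : Prop :=
  [/\ is_perm p0, size Bs = size M,
      all (all (@valid_bc k)) Bs &
      forall i, i < size M -> supports (perm_at p0 Bs i.+1) (nth set0 M i)].

Definition num_bc (Bs : seq (seq (nat * nat * nat))) : nat := sumn (map size Bs).

Definition two_sbcm (k : nat) (M : seq {set 'I_k}) : Prop :=
  all (fun m : {set 'I_k} => #|m| == 2) M.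

Definition no_consecutive_equal (k : nat) (M : seq {set 'I_k}) : Prop :=
  forall i, i.+1 < size M -> nth set0 M i != nth set0 M i.+1.

From mathcomp Require Import all_boot.

Set Implicit Arguments.
Unset Strict Implicit.
Unset Printing Implicit Defensive.

(* With three characters, two 2-meetings always share a character; putting it
   in the middle position makes both meetings fit, and a single adjacent swap
   (a block crossing) moves any character to the middle.  Hence the meetings
   can be served in consecutive pairs at one block crossing per pair, and the
   first pair costs nothing because the start permutation is ours to choose. *)

Lemma perm_apply_bc (T : eqType) a b c (p : seq T) :
  a.-1 <= b -> b <= c -> perm_eq (apply_bc (a, b, c) p) p.
Proof.
move=> ab bc.
have Ep : p = take a.-1 p ++ drop a.-1 (take b p) ++ drop b (take c p) ++ drop c p.
  by rewrite -(take_takel p ab) !catA !cat_take_drop -(take_takel p bc) !cat_take_drop.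
rewrite [X in perm_eq _ X]Ep perm_cat2l !catA perm_cat2r.
by rewrite perm_catC.
Qed.

Lemma perm_apply_bcs (T : eqType) k B (p : seq T) :
  all (@valid_bc k) B -> perm_eq (apply_bcs B p) p.
Proof.
elim: B p => [|[[a b] c] B IH] p //= /andP [/and4P [_ ab bc _] vB].
apply: perm_trans (IH _ vB) (perm_apply_bc _ (leq_trans (leq_pred a) ab) _).
exact: ltnW.
Qed.

Lemma perm_at_cons k (p : seq 'I_k) B Bs i :
  perm_at p (B :: Bs) i.+1 = perm_at (apply_bcs B p) Bs i.
Proof. by rewrite /perm_at /apply_bcs /= foldl_cat. Qed.

Definition solves k (M : seq {set 'I_k}) (p : seq 'I_k)
  (Bs : seq (seq (nat * nat * nat))) : Prop :=
  [/\ size Bs = size M, all (all (@valid_bc k)) Bs &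
      forall i, i < size M -> supports (perm_at p Bs i.+1) (nth set0 M i)].

Lemma solves_is_solution k (M : seq {set 'I_k}) p0 Bs :
  is_perm p0 -> solves M p0 Bs -> is_solution M p0 Bs.
Proof. by move=> pp []. Qed.

Lemma solves_nil k (p : seq 'I_k) : solves [::] p [::].
Proof. by split. Qed.

Lemma solves_cons k (p : seq 'I_k) B Bs m M :
  all (@valid_bc k) B -> supports (apply_bcs B p) m ->
  solves M (apply_bcs B p) Bs -> solves (m :: M) p (B :: Bs).
Proof.
move=> vB sm [sz vBs sM]; split=> /=; [by rewrite sz | by rewrite vB |].
case=> [_|i lt]; rewrite perm_at_cons; last exact: sM.
by rewrite /perm_at take0.
Qed.

Lemma setI_card_gt (T : finType) (A B : {set T}) :
  #|T| < #|A| + #|B| -> exists x, x \in A :&: B.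
Proof.
rewrite -cardsUI => lt_T; apply/set0Pn; rewrite -card_gt0.
by rewrite -(ltn_add2l #|A :|: B|) addn0 (leq_ltn_trans (max_card _) lt_T).
Qed.

Lemma supports_middle (u w v : 'I_3) (m : {set 'I_3}) :
  is_perm [:: u; w; v] -> #|m| == 2 -> w \in m -> supports [:: u; w; v] m.
Proof.
move=> pp /cards2P [a [b [ab ->]]] wab.
have [t [tw ->]] : exists t, t != w /\ [set a; b] = [set w; t].
  move: wab; rewrite !inE => /orP [] /eqP ->; first by exists b; rewrite eq_sym.
  by exists a; split => //; exact: setUC.
have : t \in [:: u; w; v] by rewrite (perm_mem pp) mem_enum.
rewrite !inE (negbTE tw) /= => /orP [] /eqP ->.
- by exists 0, 2; apply/setP => x; rewrite !inE orbC.
- by exists 1, 2; apply/setP => x; rewrite !inE.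
Qed.

Lemma move_to_middle (x y z w : 'I_3) :
  w \in [:: x; y; z] ->
  exists B, [/\ all (@valid_bc 3) B, size B <= 1 &
    exists u v, apply_bcs B [:: x; y; z] = [:: u; w; v]].
Proof.
rewrite !inE => /or3P [] /eqP ->;
  [exists [:: (1, 1, 2)] | exists [::] | exists [:: (2, 2, 3)]];
  by split=> //; do 2 eexists.
Qed.

Lemma two_meetings_fit (p : seq 'I_3) (m1 m2 : {set 'I_3}) :
  is_perm p -> #|m1| == 2 -> #|m2| == 2 ->
  exists B, [/\ all (@valid_bc 3) B, size B <= 1, is_perm (apply_bcs B p),
    supports (apply_bcs B p) m1 & supports (apply_bcs B p) m2].
Proof.
move=> pp m1_2 m2_2.
have [w] : exists w, w \in m1 :&: m2.
  by apply: setI_card_gt; rewrite card_ord (eqP m1_2) (eqP m2_2).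
rewrite inE => /andP [wm1 wm2].
have wp : w \in p by rewrite (perm_mem pp) mem_enum.
have : size p = 3 by rewrite (perm_size pp) size_enum_ord.
case: p pp wp => [|x [|y [|z [|]]]] // pp wp _.
have [B [vB sB [u [v eB]]]] := move_to_middle wp.
have pB : is_perm [:: u; w; v].
  by rewrite -eB; exact: perm_trans (perm_apply_bcs _ vB) pp.
by exists B; rewrite eB; split; try apply: supports_middle.
Qed.

Lemma solves_in_pairs n (M : seq {set 'I_3}) (p : seq 'I_3) :
  size M <= n -> two_sbcm M -> is_perm p ->
  exists Bs, solves M p Bs /\ num_bc Bs <= uphalf (size M).
Proof.
elim: n M p => [|n IH] [|m1 [|m2 M]] p //= sz;
  try by exists [::]; split; first exact: solves_nil.
- move=> /andP [m1_2 _] pp.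
  have [B [vB sB _ s1 _]] := two_meetings_fit pp m1_2 m1_2.
  exists [:: B]; split; first exact: solves_cons vB s1 (solves_nil _).
  by rewrite /num_bc /= addn0.
- move=> /and3P [m1_2 m2_2 tM] pp.
  have [B [vB sB pB s1 s2]] := two_meetings_fit pp m1_2 m2_2.
  have [|Bs [sol cost]] := IH M _ _ tM pB; first by rewrite -ltnS ltnW.
  exists [:: B, [::] & Bs]; split.
    exact: solves_cons vB s1 (solves_cons (B := [::]) isT s2 sol).
  by rewrite /num_bc /= add0n -add1n leq_add.
Qed.

Theorem lemma5 (M : seq {set 'I_3}) :
  two_sbcm M -> 1 <= size M -> no_consecutive_equal M ->
  exists (p0 : seq 'I_3) (Bs : seq (seq (nat * nat * nat))),
    is_solution M p0 Bs /\ num_bc Bs <= (uphalf (size M)).-1.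
Proof.
case: M => [|m1 M] //= /andP [m1_2 tM] _ _.
have m2_2 : #|head m1 M| == 2 by case: M tM => //= m2 M /andP [].
have [B [_ _ pB s1 s2]] := two_meetings_fit (perm_refl (enum 'I_3)) m1_2 m2_2.
exists (apply_bcs B (enum 'I_3)).
case: M tM s2 {m2_2} => [|m2 M] /= tM s2.
  exists [:: [::]]; split=> //.
  exact: (solves_is_solution pB (solves_cons (B := [::]) isT s1 (solves_nil _))).
have [Bs [sol cost]] := solves_in_pairs (leqnn _) (proj2 (andP tM)) pB.
exists [:: [::], [::] & Bs]; split; last by rewrite /num_bc.
apply: (solves_is_solution pB).
exact: (solves_cons (B := [::]) isT s1 (solves_cons (B := [::]) isT s2 sol)).
Qed.
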